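(* Let $\mathcal{T}$ be the law with tail function $\overline{F}(t)=e^{-t}$ for $t\in[0,1)\cup(2,\infty)$ and $\overline{F}(t)=e^{-2}$ for $t\in[1,2]$. Then $\overline{F}(u)\overline{F}(1)\leq\overline{F}(1+u)$ for all $u\in[0,\infty)$, yet for every $\epsilon\in(0,\tfrac12)$, with $r=\tfrac12+\epsilon$, one has $\mathcal{T}^{\delta_r}((1,\infty])>\mathcal{T}((1,\infty])$.
   Context: For a probability law $\mathcal{T}$ on $[0,\infty]$ and $r\in(0,\infty)$: let $(T_k)_{k\in\mathbb{N}}$ be i.i.d. with law $\mathcal{T}$; $\mathcal{T}^{\delta_r}$ is the law of the random time $\tilde T$ defined a.s. by $\tilde T=(k-1)r+T_k$ on $\{T_1>r,\ldots,T_{k-1}>r,T_k\leq r\}$, $k\in\mathbb{N}$ (deterministic reset with period $r$). The tail function is $\overline{F}(t)=\mathcal{T}((t,\infty])$. *)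

From Stdlib Require Import Reals.
Open Scope R_scope.

Inductive xR : Type := Fin (x : R) | Inf.

Definition xgt (x : xR) (t : R) : Prop :=
  match x with Fin y => t < y | Inf => True end.

(* x <= b, where b = None stands for +infinity *)
Definition xle (x : xR) (b : option R) : Prop :=
  match b, x with
  | None, _ => True
  | Some b', Fin y => y <= b'
  | Some _, Inf => False
  end.

Definition xnonneg (x : xR) : Prop :=
  match x with Fin y => 0 <= y | Inf => True end.

Record prob_space : Type := {
  Omega : Type;
  meas : (Omega -> Prop) -> Prop;
  P : (Omega -> Prop) -> R;
  meas_full : meas (fun _ => True);
  meas_compl : forall A, meas A -> meas (fun w => ~ A w);
  meas_cunion : forall A : nat -> Omega -> Prop,
      (forall n, meas (A n)) -> meas (fun w => exists n, A n w);
  P_nonneg : forall A, meas A -> 0 <= P A;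
  P_full : P (fun _ => True) = 1;
  P_sigma_add : forall A : nat -> Omega -> Prop,
      (forall n, meas (A n)) ->
      (forall m n w, m <> n -> A m w -> A n w -> False) ->
      infinite_sum (fun n => P (A n)) (P (fun w => exists n, A n w))
}.

Fixpoint prodR (f : nat -> R) (n : nat) : R :=
  match n with O => 1 | S m => prodR f m * f m end.

Definition interval_event {Om : Type} (X : Om -> xR) (a : R) (b : option R)
  : Om -> Prop := fun w => xgt (X w) a /\ xle (X w) b.

(* (T_k) is an i.i.d. sequence of [0,infinity]-valued random variables whose
   common law has tail function Fbar, i.e. P(T_k > t) = Fbar t for t >= 0.
   Independence is required on the pi-system of intervals (a,b], (a,infinity]
   (which generates the Borel sets of [0,infinity] and contains the whole space). *)
Definition iid_with_tail (S : prob_space) (T : nat -> Omega S -> xR)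
  (Fbar : R -> R) : Prop :=
  (forall k w, xnonneg (T k w)) /\
  (forall k t, meas S (fun w => xgt (T k w) t)) /\
  (forall k t, 0 <= t -> P S (fun w => xgt (T k w) t) = Fbar t) /\
  (forall (n : nat) (a : nat -> R) (b : nat -> option R),
      P S (fun w => forall k, (k < n)%nat -> interval_event (T k) (a k) (b k) w)
      = prodR (fun k => P S (interval_event (T k) (a k) (b k))) n).

(* The event {Ttilde > t} for the deterministic reset with period r:
   Ttilde = (k-1) r + T_k on {T_1 > r, ..., T_(k-1) > r, T_k <= r}.
   Here indices are 0-based: j = k-1. *)
Definition reset_gt {Om : Type} (T : nat -> Om -> xR) (r t : R) : Om -> Prop :=
  fun w => exists j : nat,
    (forall i, (i < j)%nat -> xgt (T i w) r) /\
    exists y, T j w = Fin y /\ y <= r /\ t < INR j * r + y.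

Definition Fbar_ex (t : R) : R :=
  if Rlt_dec t 1 then exp (- t)
  else if Rle_dec t 2 then exp (- 2)
  else exp (- t).

(* For the second claim write Ttilde for the time with deterministic reset of
   period r.  The event {Ttilde > t} is the disjoint union over j of the events
     E_j = {T_0 > r, ..., T_(j-1) > r, t - j r < T_j <= r},
   so by independence P(Ttilde > t) = sum_j Fbar(r)^j P(t - j r < T_0 <= r).
   For t = 1 and 1/2 < r < 1 the terms j = 1, 2, 3 telescope to
   e^{-1} - e^{-4r}, which already exceeds e^{-2} = Fbar(1) because e > 2. *)

From Stdlib Require Import Reals Lra Lia FunctionalExtensionality PropExtensionality.
Open Scope R_scope.

Lemma event_ext {O : Type} (A B : O -> Prop) : (forall w, A w <-> B w) -> A = B.
Proof.
  intro H; apply functional_extensionality; intro w.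
  apply propositional_extensionality; auto.
Qed.

Section ProbabilityBasics.
Variable Sp : prob_space.

Lemma meas_empty : meas Sp (fun _ => False).
Proof.
  replace (fun _ : Omega Sp => False) with (fun _ : Omega Sp => ~ True).
  - apply meas_compl, meas_full.
  - apply event_ext; tauto.
Qed.

(* Binary unions are countable unions with an eventually repeated event. *)
Lemma meas_union A B : meas Sp A -> meas Sp B -> meas Sp (fun w => A w \/ B w).
Proof.
  intros HA HB.
  replace (fun w => A w \/ B w)
    with (fun w => exists n : nat, (match n with O => A | _ => B end) w).
  - apply meas_cunion; intros [|n]; auto.
  - apply event_ext; intro w; split.
    + intros [[|n] H]; auto.
    + intros [H|H]; [exists O | exists 1%nat]; auto.
Qed.

Lemma meas_inter A B : meas Sp A -> meas Sp B -> meas Sp (fun w => A w /\ B w).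
Proof.
  intros HA HB.
  replace (fun w => A w /\ B w) with (fun w => ~ (~ A w \/ ~ B w)).
  - apply meas_compl, meas_union; apply meas_compl; auto.
  - apply event_ext; intro w; tauto.
Qed.

Lemma sum_const (c : R) (n : nat) : sum_f_R0 (fun _ => c) n = INR (S n) * c.
Proof.
  induction n as [|n IH]; simpl sum_f_R0; [simpl; lra|].
  rewrite IH, (S_INR (S n)); lra.
Qed.

(* Countable additivity applied to the constant family of empty events forces
   the series c + c + ... to converge, hence c = 0. *)
Lemma P_empty : P Sp (fun _ => False) = 0.
Proof.
  assert (Hsum := P_sigma_add Sp (fun _ _ => False) (fun _ => meas_empty) ltac:(tauto)).
  cbv beta in Hsum.
  replace (fun _ : Omega Sp => exists _ : nat, False) with (fun _ : Omega Sp => False)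
    in Hsum by (apply event_ext; intro; split; [tauto | intros [_ []]]).
  set (c := P Sp (fun _ => False)) in *.
  assert (Hc : 0 <= c) by apply (P_nonneg Sp _ meas_empty).
  destruct (Req_dec c 0) as [E|E]; auto.
  destruct (Hsum c ltac:(lra)) as [N HN].
  specialize (HN (S N) ltac:(lia)).
  rewrite sum_const in HN; unfold Rdist in HN; rewrite !S_INR in HN.
  pose proof (pos_INR N).
  assert (INR N * c >= 0) by (apply Rle_ge, Rmult_le_pos; lra).
  rewrite Rabs_right in HN; nra.
Qed.

(* Finite additivity for two disjoint events: the family A, B, empty, empty, ... *)
Lemma P_add A B : meas Sp A -> meas Sp B -> (forall w, A w -> B w -> False) ->
  P Sp (fun w => A w \/ B w) = P Sp A + P Sp B.
Proof.
  intros HA HB Hdisj.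
  set (F := fun n : nat => match n with O => A | 1%nat => B | _ => fun _ => False end).
  assert (Hsum := P_sigma_add Sp F).
  replace (fun w => exists n, F n w) with (fun w => A w \/ B w) in Hsum.
  2:{ apply event_ext; intro w; split.
      - intros [h|h]; [exists O | exists 1%nat]; auto.
      - intros [[|[|n]] h]; simpl in h; tauto. }
  eapply uniqueness_sum; [apply Hsum|].
  - intros [|[|n]]; simpl; auto using meas_empty.
  - intros [|[|m]] [|[|n]] w hmn; simpl; try tauto;
      try (intros; eapply Hdisj; eauto); lia.
  - assert (Hpartial : forall n, sum_f_R0 (fun n => P Sp (F n)) (S n) = P Sp A + P Sp B).
    { induction n as [|n IH]; [simpl; lra|].
      rewrite tech5, IH; simpl; rewrite P_empty; lra. }
    intros eps heps; exists 1%nat; intros n hn.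
    destruct n as [|n]; [lia|].
    cbv beta in Hpartial |- *; rewrite Hpartial.
    unfold Rdist; rewrite Rminus_diag, Rabs_R0; lra.
Qed.

Lemma P_diff A B : meas Sp A -> meas Sp B -> (forall w, B w -> A w) ->
  P Sp (fun w => A w /\ ~ B w) = P Sp A - P Sp B.
Proof.
  intros HA HB Hsub.
  assert (Hsplit : P Sp A = P Sp (fun w => B w \/ (A w /\ ~ B w))).
  { f_equal; apply event_ext; intro w; split; [tauto|].
    intros [h|h]; [auto | tauto]. }
  rewrite Hsplit, P_add; [lra | auto | | tauto].
  apply meas_inter, meas_compl; auto.
Qed.

End ProbabilityBasics.

Lemma prodR_const (f : nat -> R) (c : R) (n : nat) :
  (forall k, (k < n)%nat -> f k = c) -> prodR f n = c ^ n.
Proof.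
  induction n as [|n IH]; intro Hf; simpl; [reflexivity|].
  rewrite IH; [rewrite Hf by lia; ring | intros; apply Hf; lia].
Qed.

Lemma xle_some (x : xR) (b : R) : xle x (Some b) <-> ~ xgt x b.
Proof. destruct x; simpl; [split; intros; lra | tauto]. Qed.

Section IntervalEvents.
Variable Sp : prob_space.
Variable T : nat -> Omega Sp -> xR.
Variable Fbar : R -> R.
Hypothesis HT : iid_with_tail Sp T Fbar.

Lemma gt_meas k t : meas Sp (fun w => xgt (T k w) t).
Proof. apply HT. Qed.

Lemma gt_prob k t : 0 <= t -> P Sp (fun w => xgt (T k w) t) = Fbar t.
Proof. apply HT. Qed.

Lemma interval_as_diff k a b :
  interval_event (T k) a (Some b) = fun w => xgt (T k w) a /\ ~ xgt (T k w) b.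
Proof. apply event_ext; intro w; unfold interval_event; rewrite xle_some; tauto. Qed.

Lemma interval_meas k a b : meas Sp (interval_event (T k) a b).
Proof.
  destruct b as [b|].
  - rewrite interval_as_diff; apply meas_inter; [apply gt_meas | apply meas_compl, gt_meas].
  - replace (interval_event (T k) a None) with (fun w => xgt (T k w) a)
      by (apply event_ext; intro w; unfold interval_event; simpl; tauto).
    apply gt_meas.
Qed.

Lemma interval_prob_unbounded k a :
  0 <= a -> P Sp (interval_event (T k) a None) = Fbar a.
Proof.
  intro ha; rewrite <- (gt_prob k a ha); f_equal.
  apply event_ext; intro w; unfold interval_event; simpl; tauto.
Qed.

Lemma interval_prob k a b :
  0 <= a <= b -> P Sp (interval_event (T k) a (Some b)) = Fbar a - Fbar b.
Proof.
  intro hab.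
  rewrite interval_as_diff, P_diff by (apply gt_meas || (intro w; destruct (T k w); simpl; lra)).
  rewrite !gt_prob by lra; reflexivity.
Qed.

(* A negative lower endpoint is no constraint, since T_k >= 0. *)
Lemma interval_prob_neg k a b :
  a < 0 <= b -> P Sp (interval_event (T k) a (Some b)) = 1 - Fbar b.
Proof.
  intro hab.
  replace (interval_event (T k) a (Some b)) with (fun w => True /\ ~ xgt (T k w) b).
  - rewrite P_diff by (apply meas_full || apply gt_meas || tauto).
    rewrite P_full, gt_prob by lra; reflexivity.
  - rewrite interval_as_diff; apply event_ext; intro w.
    destruct HT as [Hnonneg _]; specialize (Hnonneg k w).
    destruct (T k w); simpl in *; split; try tauto; intros; lra.
Qed.

Lemma joint_interval_meas n a b :
  meas Sp (fun w => forall k, (k < n)%nat -> interval_event (T k) (a k) (b k) w).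
Proof.
  induction n as [|n IH].
  - replace (fun w : Omega Sp => forall k, (k < 0)%nat -> interval_event (T k) (a k) (b k) w)
      with (fun _ : Omega Sp => True) by
      (apply event_ext; intro w; split; [intros _ k hk; lia | auto]).
    apply meas_full.
  - replace (fun w => forall k, (k < S n)%nat -> interval_event (T k) (a k) (b k) w)
      with (fun w => (forall k, (k < n)%nat -> interval_event (T k) (a k) (b k) w)
                     /\ interval_event (T n) (a n) (b n) w).
    + apply meas_inter; [exact IH | apply interval_meas].
    + apply event_ext; intro w; split.
      * intros [Hprev Hlast] k hk.
        destruct (Nat.eq_dec k n); [subst; exact Hlast | apply Hprev; lia].
      * intro H; split; [intros; apply H; lia | apply H; lia].
Qed.

End IntervalEvents.

Section ResetDecomposition.
Variable Sp : prob_space.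
Variable T : nat -> Omega Sp -> xR.
Variable Fbar : R -> R.
Hypothesis HT : iid_with_tail Sp T Fbar.
Variables r t : R.

(* The j-th reset cycle is the first one to succeed, and it ends after t. *)
Definition reset_piece (j : nat) (w : Omega Sp) : Prop :=
  (forall i, (i < j)%nat -> xgt (T i w) r) /\
  exists y, T j w = Fin y /\ y <= r /\ t < INR j * r + y.

Lemma reset_piece_disjoint m n w :
  m <> n -> reset_piece m w -> reset_piece n w -> False.
Proof.
  assert (Hlt : forall m n, (m < n)%nat -> reset_piece m w -> reset_piece n w -> False).
  { intros m' n' h [_ [y [Hy [Hyr _]]]] [Hbefore _].
    specialize (Hbefore m' h); rewrite Hy in Hbefore; simpl in Hbefore; lra. }
  intros hmn Hm Hn; destruct (Nat.lt_gt_cases m n) as [[h|h] _]; eauto.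
Qed.

Definition piece_low (j k : nat) : R := if Nat.ltb k j then r else t - INR j * r.
Definition piece_high (j k : nat) : option R := if Nat.ltb k j then None else Some r.

Lemma reset_piece_as_intervals j :
  reset_piece j =
  fun w => forall k, (k < S j)%nat -> interval_event (T k) (piece_low j k) (piece_high j k) w.
Proof.
  apply event_ext; intro w; unfold piece_low, piece_high; split.
  - intros [Hbefore [y [Hy [Hyr Ht]]]] k hk.
    destruct (Nat.ltb_spec k j).
    + split; [apply Hbefore; auto | exact I].
    + assert (k = j) by lia; subst.
      unfold interval_event; rewrite Hy; simpl; split; lra.
  - intro Hk; split.
    + intros i hi; specialize (Hk i ltac:(lia)).
      destruct (Nat.ltb_spec i j); [apply Hk | lia].
    + specialize (Hk j ltac:(lia)).
      destruct (Nat.ltb_spec j j) as [|_]; [lia|].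
      destruct Hk as [Hlow Hhigh].
      destruct (T j w) as [y|]; simpl in Hlow, Hhigh; [|contradiction].
      exists y; repeat split; lra.
Qed.

Lemma reset_piece_meas j : meas Sp (reset_piece j).
Proof. rewrite reset_piece_as_intervals; apply (joint_interval_meas Sp T Fbar HT). Qed.

Lemma reset_piece_prob j : 0 <= r ->
  P Sp (reset_piece j) = Fbar r ^ j * P Sp (interval_event (T j) (t - INR j * r) (Some r)).
Proof.
  intro hr.
  rewrite reset_piece_as_intervals; destruct HT as (_ & _ & _ & Hindep).
  rewrite Hindep; simpl prodR.
  rewrite (prodR_const _ (Fbar r)).
  - unfold piece_low, piece_high; rewrite Nat.ltb_irrefl; reflexivity.
  - intros k hk; unfold piece_low, piece_high.
    rewrite (proj2 (Nat.ltb_lt k j) hk).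
    apply (interval_prob_unbounded Sp T Fbar HT); exact hr.
Qed.

(* The reset time exceeds t on the disjoint union of the pieces; hence any
   partial sum of their probabilities is a lower bound. *)
Lemma reset_partial_sum_le N :
  sum_f_R0 (fun j => P Sp (reset_piece j)) N <= P Sp (reset_gt T r t).
Proof.
  apply sum_incr.
  - exact (P_sigma_add Sp reset_piece reset_piece_meas reset_piece_disjoint).
  - intro j; apply P_nonneg, reset_piece_meas.
Qed.

End ResetDecomposition.

Lemma exp_le_mono x y : x <= y -> exp x <= exp y.
Proof. intros [h|h]; [left; apply exp_increasing; exact h | subst; lra]. Qed.

Lemma Fbar_ex_lt1 t : t < 1 -> Fbar_ex t = exp (- t).
Proof. intro h; unfold Fbar_ex; destruct (Rlt_dec t 1); [reflexivity | lra]. Qed.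

Lemma Fbar_ex_1 : Fbar_ex 1 = exp (-2).
Proof.
  unfold Fbar_ex; destruct (Rlt_dec 1 1); [lra|].
  destruct (Rle_dec 1 2); [reflexivity | lra].
Qed.

(* First claim: on every branch of Fbar_ex the inequality reduces to
   exp a * exp b <= exp c with a + b <= c. *)
Lemma Fbar_ex_shift_bound u : 0 <= u -> Fbar_ex u * Fbar_ex 1 <= Fbar_ex (1 + u).
Proof.
  intro hu; rewrite Fbar_ex_1; unfold Fbar_ex.
  destruct (Rlt_dec u 1); destruct (Rlt_dec (1 + u) 1); try lra;
  destruct (Rle_dec (1 + u) 2); try destruct (Rle_dec u 2); try lra;
  rewrite <- exp_plus; apply exp_le_mono; lra.
Qed.

(* For 1/2 < r < 1 the pieces j = 1, 2, 3 of {Ttilde > 1} have probabilities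
   e^{-1} - e^{-2r}, e^{-2r}(1 - e^{-r}) and e^{-3r}(1 - e^{-r}). *)
Lemma example_pieces_sum Sp T r :
  iid_with_tail Sp T Fbar_ex -> 1/2 < r < 1 ->
  P Sp (reset_piece Sp T r 1 1) + P Sp (reset_piece Sp T r 1 2)
    + P Sp (reset_piece Sp T r 1 3) = exp (-1) - exp (-r) ^ 4.
Proof.
  intros HT hr.
  rewrite !(reset_piece_prob Sp T Fbar_ex HT) by lra; simpl INR.
  rewrite (interval_prob Sp T Fbar_ex HT) by lra.
  rewrite !(interval_prob_neg Sp T Fbar_ex HT) by lra.
  rewrite !Fbar_ex_lt1 by lra.
  assert (Hone : exp (- r) * exp (- (1 - 1 * r)) = exp (-1)).
  { rewrite <- exp_plus; f_equal; ring. }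
  rewrite <- Hone; ring.
Qed.

(* e^{-1} - e^{-4r} > e^{-2} when r > 1/2, using e^{-4r} < e^{-2} and e > 2. *)
Lemma example_numeric_bound r : 1/2 < r -> exp (-1) - exp (- r) ^ 4 > exp (-2).
Proof.
  intro hr.
  assert (Hpow : exp (- r) ^ 4 < exp (-2)).
  { replace (exp (- r) ^ 4) with (exp (- r) * exp (- r) * exp (- r) * exp (- r)) by ring.
    rewrite <- !exp_plus; apply exp_increasing; lra. }
  assert (Hsq : exp (-2) = exp (-1) * exp (-1)) by (rewrite <- exp_plus; f_equal; ring).
  assert (Hinv : exp (-1) * exp 1 = 1) by (rewrite <- exp_plus; replace (-1 + 1) with 0 by ring; apply exp_0).
  assert (He : 2 < exp 1) by (pose proof (exp_ineq1 1 ltac:(lra)); lra).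
  pose proof (exp_pos (-1)).
  assert (exp (-1) < 1/2) by nra.
  nra.
Qed.

Theorem mainTheorem11 :
  (forall u : R, 0 <= u -> Fbar_ex u * Fbar_ex 1 <= Fbar_ex (1 + u)) /\
  (forall (S : prob_space) (T : nat -> Omega S -> xR),
      iid_with_tail S T Fbar_ex ->
      forall eps : R, 0 < eps < 1/2 ->
        P S (reset_gt T (1/2 + eps) 1) > Fbar_ex 1).
Proof.
  split; [exact Fbar_ex_shift_bound|].
  intros Sp T HT eps heps.
  set (r := 1/2 + eps).
  assert (hr : 1/2 < r < 1) by (unfold r; lra).
  pose proof (reset_partial_sum_le Sp T Fbar_ex HT r 1 3) as Hlower; simpl sum_f_R0 in Hlower.
  pose proof (P_nonneg Sp _ (reset_piece_meas Sp T Fbar_ex HT r 1 0)).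
  pose proof (example_pieces_sum Sp T r HT hr).
  pose proof (example_numeric_bound r (proj1 hr)).
  rewrite Fbar_ex_1; lra.
Qed.
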